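(* Let $F:[0,1]^n\to\mathbb{R}$ be twice differentiable, and let $\omega\in\mathbb{R}_{+}$ be such that for all $x\in[0,1]^n$ and all $i,j$, $\nabla^2F(x)_{i,i}=0$ and $\nabla^2F(x)_{i,j}\le\omega$. Then $F$ is $\left(\frac{n}{2}(n^{3/2}-1)\omega\right)$-up-concave.
   Context: $F:[0,1]^n\to\mathbb{R}$ is $\epsilon$-up-concave ($\epsilon\ge0$) if for every $u\in\mathbb{R}^n_{+}$, $x\in[0,1]^n$, the function $G_{x,u}(t)=F(tu+x)$ satisfies $G_{x,u}(\lambda t_1+(1-\lambda)t_2)\ge\lambda G_{x,u}(t_1)+(1-\lambda)G_{x,u}(t_2)-\epsilon$ for all $\lambda\in[0,1]$ and $t_1,t_2\in\mathbb{R}$ such that $t_1u+x$, $t_2u+x$, and $x+\lambda t_1u+(1-\lambda)t_2u$ lie in $[0,1]^n$. *)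

From HB Require Import structures.
From mathcomp Require Import all_boot all_order all_algebra.
From mathcomp Require Import all_classical all_reals all_analysis.
Set Implicit Arguments. Unset Strict Implicit. Unset Printing Implicit Defensive.
Import Order.TTheory GRing.Theory Num.Theory.
Import numFieldNormedType.Exports.
Local Open Scope ring_scope.

(* points of R^n are row vectors 'rV[R]_n; x ord0 i is the i-th coordinate *)

Definition in_cube (R : realType) (n : nat) (x : 'rV[R]_n) : Prop :=
  forall i : 'I_n, 0 <= x ord0 i <= 1.

Definition nonneg_vec (R : realType) (n : nat) (u : 'rV[R]_n) : Prop :=
  forall i : 'I_n, 0 <= u ord0 i.

Definition basis_vec (R : realType) (n : nat) (i : 'I_n) : 'rV[R]_n :=
  delta_mx ord0 i.

Definition partial (R : realType) (n : nat) (i : 'I_n)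
  (F : 'rV[R]_n -> R) : 'rV[R]_n -> R :=
  fun y => 'D_(basis_vec R i) F y.

Definition hessian (R : realType) (n : nat) (F : 'rV[R]_n -> R)
  (x : 'rV[R]_n) (i j : 'I_n) : R :=
  'D_(basis_vec R j) (partial i F) x.

Definition twice_differentiable_on_cube (R : realType) (n : nat)
  (F : 'rV[R]_n -> R) : Prop :=
  forall x : 'rV[R]_n, in_cube x ->
    differentiable F x /\ forall i : 'I_n, differentiable (partial i F) x.

Definition up_concave (R : realType) (n : nat) (eps : R)
  (F : 'rV[R]_n -> R) : Prop :=
  forall (u x : 'rV[R]_n), nonneg_vec u -> in_cube x ->
  forall (lam t1 t2 : R), 0 <= lam <= 1 ->
    in_cube (t1 *: u + x) -> in_cube (t2 *: u + x) ->
    in_cube (x + (lam * t1) *: u + ((1 - lam) * t2) *: u) ->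
    F ((lam * t1 + (1 - lam) * t2) *: u + x)
      >= lam * F (t1 *: u + x) + (1 - lam) * F (t2 *: u + x) - eps.

From HB Require Import structures.
From mathcomp Require Import all_boot all_order all_algebra.
From mathcomp Require Import all_classical all_reals all_analysis.
From mathcomp Require Import ring lra.
Import Order.TTheory GRing.Theory Num.Theory.
Import numFieldNormedType.Exports.
Local Open Scope ring_scope.

(* Restrict F to the chord from p = t1 u + x to q = t2 u + x, parametrised over
   [0, 1] with direction v = q - p = (t2 - t1) u.  Its second derivative is the
   Hessian form sum_ij v_i v_j H_ij: the diagonal terms vanish and every product
   v_i v_j lies in [0, 1] (u >= 0, and |v_i| <= 1 as p and q lie in the cube),
   so the second derivative is at most (n^2 - n) omega.  A function whose
   second derivative is at most M lies above its chords up to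
   M/2 l (1 - l) <= M/8, and (n^2 - n)/8 <= n (n^(3/2) - 1)/2. *)

Lemma chord_le_of_derive2_le (R : realType) (G : R -> R) (a b M : R) :
  a <= b ->
  (forall t, a <= t <= b -> derivable G t 1) ->
  (forall t, a < t < b -> derivable ('D_1 G) t 1 /\ 'D_1 ('D_1 G) t <= M) ->
  forall l, 0 <= l <= 1 ->
  l * G a + (1 - l) * G b - M / 2 * (l * (1 - l) * (b - a) ^+ 2)
    <= G (l * a + (1 - l) * b).
Proof.
move=> ab dG ddG l /andP[l0 l1].
pose q : R -> R^o := fun r => M / 2 * r ^+ 2.
have dq (y : R) : is_derive y 1 q (M * y).
  by apply: is_derive_eq; rewrite /GRing.scale /=; field.
(* [f] is convex, and [q] misses its chords by exactly the error term. *)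
pose f : R -> R^o := q - G.
have df (y : R) : a <= y <= b -> is_derive y 1 f (M * y - 'D_1 G y).
  by move=> /dG/derivableP dGy; apply: is_deriveB.
have d2f (y : R) : a < y < b -> is_derive y 1 ('D_1 f) (M - 'D_1 ('D_1 G) y).
  move=> yab; have [/derivableP d2G _] := ddG y yab.
  have Df_near : \forall z \near y, M * z - 'D_1 G z = 'D_1 f z.
    have := near_in_itvoo (a := a) (b := b) (x := y).
    rewrite in_itv /= yab => /(_ isT); apply: filterS => z.
    rewrite in_itv /= => /andP[az zb]; have zab : a <= z <= b by rewrite !ltW.
    by have [_ ->] := df z zab.
  apply: near_eq_is_derive Df_near _; apply: is_deriveB.
  by apply: is_derive_eq; rewrite /GRing.scale /= mulr1.
have cf (y : R) : a <= y <= b -> {for y, continuous f}.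
  by move=> /df [/derivable1_diffP /differentiable_continuous].
have f_convex : f (l * a + (1 - l) * b) <= l * f a + (1 - l) * f b.
  have := @second_derivative_convex R f a b _ _ _ _ _ (Itv01 l0 l1) ab.
  rewrite !convRE /= /unstable.onem; apply.
  - by move=> y yab; have [_ ->] := d2f y yab; have [_] := ddG y yab; rewrite subr_ge0.
  - by apply: cvg_at_left_filter; apply: cf; rewrite ab lexx.
  - by apply: cvg_at_right_filter; apply: cf; rewrite ab lexx.
  - by move=> y; rewrite in_itv /= => /andP[ay yb]; have [] := df y; rewrite ?ltW.
  - by move=> y; rewrite in_itv /= => /d2f [].
move: f_convex; rewrite /f /q !fctE => f_convex.
have quadratic_gap : l * (M / 2 * a ^+ 2) + (1 - l) * (M / 2 * b ^+ 2)
   - M / 2 * (l * a + (1 - l) * b) ^+ 2 = M / 2 * (l * (1 - l) * (b - a) ^+ 2).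
  by ring.
lra.
Qed.

Lemma sum_offdiag_const (R : pzRingType) (n : nat) (w : R) :
  \sum_(i < n) \sum_(j < n) (if i == j then 0 else w) = (n%:R ^+ 2 - n%:R) * w.
Proof.
have row_sum (i : 'I_n) : \sum_(j < n) (if i == j then 0 else w) = n%:R * w - w.
  rewrite (eq_bigr (fun j => w - (if i == j then w else 0))); last first.
    by move=> j _; case: eqP => _; rewrite ?subrr ?subr0.
  rewrite sumrB sumr_const card_ord -big_mkcond /=.
  rewrite (eq_bigl (fun j => j == i)); last by move=> j; rewrite eq_sym.
  by rewrite big_pred1_eq mulr_natl.
rewrite (eq_bigr (fun _ => n%:R * w - w)) // sumr_const card_ord.
by rewrite mulrnBl -mulrnAl -[w *+ n]mulr_natl mulrBl expr2 mulr_natr.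
Qed.

Lemma offdiag_form_le (R : numDomainType) (n : nat) (v : 'I_n -> R)
    (H : 'I_n -> 'I_n -> R) (w : R) :
  0 <= w -> (forall i, H i i = 0) -> (forall i j, H i j <= w) ->
  (forall i j, 0 <= v i * v j <= 1) ->
  \sum_(i < n) \sum_(j < n) v i * v j * H i j <= (n%:R ^+ 2 - n%:R) * w.
Proof.
move=> w0 H0 Hw v01; rewrite -sum_offdiag_const.
apply: ler_sum => i _; apply: ler_sum => j _.
case: eqP => [<-|_]; first by rewrite H0 mulr0.
have /andP[vv0 vv1] := v01 i j.
exact: le_trans (ler_wpM2l vv0 (Hw i j)) (ler_piMl w0 vv1).
Qed.

Lemma natr_le_powR (R : realType) (n : nat) (r : R) :
  1 <= r -> n%:R <= powR n%:R r.
Proof.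
case: n => [|m] r1; first by rewrite powR0 // gt_eqF // (lt_le_trans ltr01).
by apply: le1r_powR; rewrite ?ler1n.
Qed.

Lemma offdiag_chord_error_le {R : realType} (n : nat) (l w : R) :
  0 <= l <= 1 -> 0 <= w ->
  (n%:R ^+ 2 - n%:R) * w / 2 * (l * (1 - l))
    <= n%:R / 2 * (powR n%:R (3 / 2) - 1) * w.
Proof.
move=> /andP[l0 l1] w0.
have N_le_P : n%:R <= powR n%:R (3 / 2) :> R by apply: natr_le_powR; lra.
set N : R := n%:R in N_le_P *; set P := powR N (3 / 2) in N_le_P *.
have quarter : l * (1 - l) <= 1 / 4.
  by rewrite -subr_ge0 (_ : _ - _ = (l - 1 / 2) ^+ 2) ?sqr_ge0 //; field.
have [->|N1] : N = 0 \/ 1 <= N.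
  by rewrite /N; case: n {N P N_le_P} => [|m]; [left|right; rewrite ler1n].
  by rewrite expr0n /= !(subrr, mul0r).
have NN1 : 0 <= N * (N - 1) * w by rewrite !mulr_ge0 // subr_ge0.
have NP1 : N * (N - 1) * w <= N * (P - 1) * w.
  by rewrite ler_wpM2r // ler_wpM2l ?(le_trans ler01 N1) // lerD2r.
nra.
Qed.

Section CubeSegment.
Context {R : realType} {n : nat}.
Implicit Types (p q u x : 'rV[R]_n) (s : R).

Lemma in_cube_segment p q s :
  in_cube p -> in_cube q -> 0 <= s <= 1 -> in_cube (s *: (q - p) + p).
Proof.
move=> cp cq /andP[s0 s1] i; rewrite !mxE.
have /andP[? ?] := cp i; have /andP[? ?] := cq i.
by apply/andP; split; nra.
Qed.

Lemma cube_chord_mul_bound u x (t1 t2 : R) i j :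
  nonneg_vec u -> in_cube (t1 *: u + x) -> in_cube (t2 *: u + x) ->
  0 <= ((t2 - t1) *: u) ord0 i * ((t2 - t1) *: u) ord0 j <= 1.
Proof.
move=> u0 c1 c2; rewrite !mxE.
have coord_le1 k : `|(t2 - t1) * u ord0 k| <= 1.
  have := c1 k; have := c2 k; rewrite !mxE ler_norml => /andP[? ?] /andP[? ?].
  by apply/andP; split; lra.
apply/andP; split.
  by rewrite mulrACA -expr2 mulr_ge0 ?sqr_ge0 ?mulr_ge0.
rewrite (le_trans (ler_norm _)) // normrM -[1]mulr1.
by rewrite ler_pM ?normr_ge0 ?coord_le1.
Qed.

End CubeSegment.

Section DeriveAlongLine.
Variables (R : realType) (V W : normedModType R).

Let line_difference_quotient (P : V -> W) (v p : V) (t : R) :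
  (fun h : R => h^-1 *: ((fun s : R => P (s *: v + p)) (h *: (1 : R) + t)
                         - P (t *: v + p)))
  = (fun h : R => h^-1 *: (P (h *: v + (t *: v + p)) - P (t *: v + p))).
Proof.
apply/funext => h; congr (_ *: (P _ - _)).
by rewrite [h *: 1]mulr1 scalerDl addrA.
Qed.

Lemma derive_line (P : V -> W) (v p : V) (t : R) :
  'D_1 (fun s : R => P (s *: v + p)) t = 'D_v P (t *: v + p).
Proof. by rewrite /derive /= line_difference_quotient. Qed.

Lemma derivable_line (P : V -> W) (v p : V) (t : R) :
  derivable (fun s : R => P (s *: v + p)) t 1 = derivable P (t *: v + p) v.
Proof. by rewrite /derivable /= line_difference_quotient. Qed.

End DeriveAlongLine.

Lemma derive_partialE (R : realType) (n : nat) (P : 'rV[R]_n -> R)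
    (v p : 'rV[R]_n) :
  differentiable P p -> 'D_v P p = \sum_(i < n) v ord0 i * partial i P p.
Proof.
move=> dP; rewrite deriveE // {1}(row_sum_delta v) linear_sum.
by apply: eq_bigr => i _; rewrite linearZ /= /partial /basis_vec deriveE.
Qed.

Section SecondDerivativeAlongSegment.
Context {R : realType} {n : nat} {F : 'rV[R]_n -> R} {v p : 'rV[R]_n}.
Hypothesis F2 : twice_differentiable_on_cube F.
Hypothesis segment_in_cube : forall s, 0 <= s <= 1 -> in_cube (s *: v + p).

Lemma derivable_segment (t : R) :
  0 <= t <= 1 -> derivable (fun s : R => F (s *: v + p)) t 1.
Proof.
move=> t01; rewrite derivable_line; apply: diff_derivable.
exact: (F2 _ (segment_in_cube _ t01)).1.
Qed.

Lemma derive_segment (t : R) : 0 <= t <= 1 ->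
  'D_1 (fun s : R => F (s *: v + p)) t
    = \sum_(i < n) v ord0 i * partial i F (t *: v + p).
Proof.
move=> t01; rewrite derive_line derive_partialE //.
exact: (F2 _ (segment_in_cube _ t01)).1.
Qed.

Lemma is_derive2_segment (t : R) : 0 < t < 1 ->
  is_derive t 1 ('D_1 (fun s : R => F (s *: v + p)))
    (\sum_(i < n) \sum_(j < n) v ord0 i * v ord0 j * hessian F (t *: v + p) i j).
Proof.
move=> t01; have /andP[t0 t1] := t01.
have t01' : 0 <= t <= 1 by rewrite !ltW.
have dF2 := (F2 _ (segment_in_cube _ t01')).2.
pose K := \sum_(i < n) (fun s : R => v ord0 i * partial i F (s *: v + p)).
have KE : \forall s \near t, K s = 'D_1 (fun s : R => F (s *: v + p)) s.
  have := near_in_itvoo (a := 0) (b := 1) (x := t).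
  rewrite in_itv /= t01 => /(_ isT); apply: filterS => s.
  rewrite in_itv /= => /andP[s0 s1].
  by rewrite /K fct_sumE derive_segment // !ltW.
apply: near_eq_is_derive KE _; apply: is_derive_eq.
  apply: is_derive_sum => i.
  have di : derivable (fun s : R => partial i F (s *: v + p)) t 1.
    by rewrite derivable_line; apply: diff_derivable; exact: dF2.
  exact: (is_deriveZ (v ord0 i) (derivableP di)).
apply: eq_bigr => i _; rewrite derive_line derive_partialE; last exact: dF2.
by rewrite /GRing.scale /= mulr_sumr; apply: eq_bigr => j _; rewrite mulrA.
Qed.

Lemma derive2_segment_le (omega : R) (t : R) :
  (forall i j, 0 <= v ord0 i * v ord0 j <= 1) -> 0 <= omega ->
  (forall x : 'rV[R]_n, in_cube x ->
     forall i j : 'I_n, hessian F x i i = 0 /\ hessian F x i j <= omega) ->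
  0 < t < 1 ->
  derivable ('D_1 (fun s : R => F (s *: v + p))) t 1 /\
  'D_1 ('D_1 (fun s : R => F (s *: v + p))) t <= (n%:R ^+ 2 - n%:R) * omega.
Proof.
move=> v01 omega0 hessF t01; have [dG2 ->] := is_derive2_segment _ t01.
have /andP[t0 t1] := t01; have /hessF Ht : in_cube (t *: v + p).
  by apply: segment_in_cube; rewrite !ltW.
split=> //; apply: offdiag_form_le => // [i|i j].
  exact: (Ht i i).1.
exact: (Ht i j).2.
Qed.

End SecondDerivativeAlongSegment.

Theorem mainTheorem7 (R : realType) (n : nat) (F : 'rV[R]_n -> R) (omega : R) :
  twice_differentiable_on_cube F ->
  0 <= omega ->
  (forall x : 'rV[R]_n, in_cube x ->
     forall i j : 'I_n, hessian F x i i = 0 /\ hessian F x i j <= omega) ->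
  up_concave ((n%:R / 2) * (powR n%:R (3 / 2) - 1) * omega) F.
Proof.
move=> F2 omega0 hessF u x u0 _ l t1 t2 l01 c1 c2 _.
set p := t1 *: u + x; set v := (t2 - t1) *: u.
have segment s : 0 <= s <= 1 -> in_cube (s *: v + p).
  have -> : v = (t2 *: u + x) - p by rewrite opprD addrACA subrr addr0 -scalerBl.
  exact: in_cube_segment.
have v01 i j : 0 <= v ord0 i * v ord0 j <= 1 by exact: cube_chord_mul_bound.
have := @chord_le_of_derive2_le R _ 0 1 _ ler01 (derivable_segment F2 segment)
  (fun t => derive2_segment_le F2 segment omega t v01 omega0 hessF) l l01.
have -> : (l * 0 + (1 - l) * 1) *: v + p = (l * t1 + (1 - l) * t2) *: u + x.
  by rewrite /v /p scalerA addrA -scalerDl; congr (_ *: _ + _); ring.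
rewrite scale0r add0r scale1r /v /p addrA -scalerDl subrK subr0 expr1n mulr1.
have := offdiag_chord_error_le n l omega l01 omega0.
lra.
Qed.
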